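(* Let $G$ be a finite group with $|G| = mp$, where $p$ is a prime and $m$ is a natural number such that $m/q < p < m$, where $q$ is the smallest prime divisor of $m$. Suppose that a Sylow $p$-subgroup of $G$ is not normal in $G$. Then $G$ possesses a characteristic abelian $p$-complement (a characteristic abelian subgroup of order $m$). *)

From mathcomp Require Import all_boot all_fingroup all_solvable.
Set Implicit Arguments. Unset Strict Implicit. Unset Printing Implicit Defensive.

From mathcomp Require Import all_boot all_fingroup all_solvable.
From mathcomp Require vcharacter.
From mathcomp Require Import zify.
Set Implicit Arguments. Unset Strict Implicit. Unset Printing Implicit Defensive.

(* Write q := pdiv m. Any factorisation m = a * b with a >= p forces b = 1,
   since otherwise m >= p * q. Hence p does not divide m, and the number of
   Sylow p-subgroups, a divisor of m that is 1 mod p but not 1, must be m: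
   P is self-normalizing and of prime order, so G is a Frobenius group with
   complement P and kernel K of order m. Every nontrivial P-invariant subgroup
   of K again has order 1 mod p, hence equals K. Applied to a P-invariant
   Sylow q-subgroup of K and then to the centre of K, this shows that K is an
   abelian q-group; being a normal Hall subgroup, it is characteristic. *)

Section SmallCofactor.

Variables p m : nat.
Hypothesis m_small : m < p * pdiv m.

Lemma cofactor_leq1 a b : p <= a -> a * b = m -> b <= 1.
Proof.
move=> le_pa def_m; rewrite leqNgt; apply/negP => b_gt1.
have : pdiv m <= b by apply: pdiv_min_dvd; rewrite // -def_m dvdn_mull.
nia.
Qed.

Lemma large_dvdn_eq a : 0 < m -> p < a -> a %| m -> a = m.
Proof.
move=> m_gt0 lt_pa /dvdnP[b def_m].
have := cofactor_leq1 (ltnW lt_pa) (esym (etrans def_m (mulnC b a))).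
by case: b def_m => [|[|]] // def_m; lia.
Qed.

Lemma ndvdn_small : p < m -> ~~ (p %| m).
Proof.
move=> lt_pm; apply/negP => /dvdnP[k def_m].
have := cofactor_leq1 (leqnn p) (esym (etrans def_m (mulnC k p))).
nia.
Qed.

End SmallCofactor.

Lemma modn_eq1_ltn n d : 1 < n -> n %% d = 1 -> d < n.
Proof.
move=> n_gt1 n_mod; rewrite ltnNge; apply/negP => le_nd.
move: n_mod; case: (ltngtP n d) le_nd => // [lt_nd | ->] _.
  by rewrite modn_small // => n1; rewrite n1 in n_gt1.
by rewrite modnn.
Qed.

Import GroupScope.

Lemma prime_self_normalizing_Frobenius (gT : finGroupType) (G P : {group gT}) :
  prime #|P| -> P != G -> 'N_G(P) = P -> [Frobenius G with complement P].
Proof.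
move=> pr_P neqPG defNP; rewrite /Frobenius_group_with_complement neqPG.
apply/normedTI_P; split; first by rewrite setD_eq0 subG1 -cardG_gt1 prime_gt1.
  by rewrite normD1 defNP.
move=> g Gg; rewrite -setI_eq0 => /set0Pn[x /setIP[/setD1P[ntx Px]]].
rewrite conjD1g => /setD1P[_ Pgx].
have sPPg : P \subset P :^ g.
  by apply: prime_meetG => //; apply/trivgPn; exists x; rewrite // inE Px.
have defPg : P :^ g = P by apply/eqP; rewrite eq_sym eqEcard sPPg cardJg leqnn.
by rewrite -defNP inE Gg; apply/normP.
Qed.

Lemma Frobenius_ker_char (gT : finGroupType) (G K H : {group gT}) :
  [Frobenius G = K ><| H] -> K \char G.
Proof.
move=> frobG; have [defG _ _ _ _] := Frobenius_context frobG.
have [nsKG _ _ _ _] := sdprod_context defG.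
by rewrite -(normal_Hall_pcore (Hall_pi (Frobenius_ker_Hall frobG)) nsKG) pcore_char.
Qed.

Section NonnormalSylow.

Variables (gT : finGroupType) (G P : {group gT}) (p m : nat).
Hypotheses (pr_p : prime p) (oG : #|G| = (m * p)%N).
Hypotheses (m_small : m < (p * pdiv m)%N) (lt_pm : p < m).
Hypothesis sylP : p.-Sylow(G) P.

Let m_gt1 : 1 < m. Proof. exact: ltn_trans (prime_gt1 pr_p) lt_pm. Qed.
Let m_gt0 : 0 < m. Proof. exact: ltnW m_gt1. Qed.

Lemma card_Sylow_small : #|P| = p.
Proof.
have pm : coprime p m by rewrite prime_coprime // ndvdn_small.
rewrite (card_Hall sylP) p_part oG (lognM _ m_gt0 (prime_gt0 pr_p)).
by rewrite logn_coprime // logn_prime // eqxx.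
Qed.

Lemma index_Sylow_small : #|G : P| = m.
Proof.
apply/eqP; rewrite -(eqn_pmul2l (prime_gt0 pr_p)) -{1}card_Sylow_small.
by rewrite Lagrange ?(pHall_sub sylP) // oG mulnC.
Qed.

Lemma Sylow_self_normalizing : ~~ (P <| G) -> 'N_G(P) = P.
Proof.
move=> nnP.
have sPG := pHall_sub sylP.
have sPN : P \subset 'N_G(P) by rewrite subsetI sPG normG.
have n_mod : #|G : 'N_G(P)| %% p = 1%N by rewrite -(card_Syl sylP) card_Syl_mod.
have n_gt1 : 1 < #|G : 'N_G(P)|.
  rewrite ltn_neqAle indexg_gt0 andbT eq_sym indexg_eq1.
  by apply: contra nnP => sGN; rewrite /normal sPG (subset_trans sGN) ?subsetIr.
have n_dvd : #|G : 'N_G(P)| %| m by rewrite -index_Sylow_small indexgS.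
have n_eq := large_dvdn_eq m_small m_gt0 (modn_eq1_ltn n_gt1 n_mod) n_dvd.
have := Lagrange_index (subsetIl G 'N(P)) sPN.
rewrite index_Sylow_small n_eq -{2}[m]muln1 => /eqP.
rewrite eqn_pmul2l // indexg_eq1 => sNP.
by apply/eqP; rewrite eqEsubset sNP.
Qed.

Lemma Frobenius_Sylow_compl : ~~ (P <| G) -> [Frobenius G with complement P].
Proof.
move=> /Sylow_self_normalizing defNP; apply: prime_self_normalizing_Frobenius defNP.
  by rewrite card_Sylow_small.
apply: contraTneq lt_pm => defP; have := oG.
rewrite -defP card_Sylow_small -{1}[p]mul1n => /eqP.
by rewrite eqn_pmul2r ?prime_gt0 // => /eqP <-; rewrite -leqNgt prime_gt0.
Qed.

Variable K : {group gT}.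
Hypothesis frobG : [Frobenius G = K ><| P].

Let defG : K ><| P = G. Proof. by case/Frobenius_context: frobG. Qed.
Let nKP : P \subset 'N(K). Proof. by case/sdprod_context: defG. Qed.

Lemma card_Frobenius_ker : #|K| = m.
Proof.
apply/eqP; rewrite -(eqn_pmul2r (prime_gt0 pr_p)) -oG -(sdprod_card defG).
by rewrite card_Sylow_small.
Qed.

Lemma Frobenius_ker_invariant_eq (K1 : {group gT}) :
  K1 \subset K -> P \subset 'N(K1) -> K1 :!=: 1 -> K1 = K.
Proof.
move=> sK1K nK1P ntK1.
have frobK1 := Frobenius_subl ntK1 sK1K nK1P frobG.
have K1_gt1 : 1 < #|K1| by rewrite cardG_gt1.
have lt_pK1 : p < #|K1|.
  have := Frobenius_dvd_ker1 frobK1; rewrite card_Sylow_small => /dvdn_leq.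
  lia.
have dvd_K1 : #|K1| %| m by rewrite -card_Frobenius_ker cardSg.
apply/val_inj/eqP; rewrite /= eqEcard sK1K card_Frobenius_ker.
by rewrite (large_dvdn_eq m_small m_gt0 lt_pK1 dvd_K1) leqnn.
Qed.

Lemma Frobenius_ker_pgroup : (pdiv m).-group K.
Proof.
have solP : solvable P.
  by apply/abelian_sol/cyclic_abelian/prime_cyclic; rewrite card_Sylow_small.
have coKP : coprime #|K| #|P|.
  by rewrite card_Frobenius_ker card_Sylow_small coprime_sym prime_coprime // ndvdn_small.
have [Q sylQ nQP] := sol_coprime_Sylow_exists (pdiv m) solP nKP coKP.
have ntQ : Q :!=: 1.
  rewrite -cardG_gt1 (card_Hall sylQ) card_Frobenius_ker p_part_gt1.
  by rewrite mem_primes pdiv_prime ?pdiv_dvd ?m_gt0.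
by rewrite -(Frobenius_ker_invariant_eq (pHall_sub sylQ) nQP ntQ) (pHall_pgroup sylQ).
Qed.

Lemma Frobenius_ker_abelian : abelian K.
Proof.
have [_ ntK _ _ _] := Frobenius_context frobG.
have ntZ : 'Z(K) :!=: 1.
  by apply: contra ntK => /eqP/(trivg_center_pgroup Frobenius_ker_pgroup) ->.
have nZP := char_norm_trans (center_char K) nKP.
by apply/center_idP; rewrite -{2}(Frobenius_ker_invariant_eq (center_sub K) nZP ntZ).
Qed.

End NonnormalSylow.

Theorem lemma2 (gT : finGroupType) (G : {group gT}) (p m : nat) :
  prime p ->
  #|G| = (m * p)%N ->
  (m < p * pdiv m)%N ->
  (p < m)%N ->
  (exists2 P : {group gT}, P \in 'Syl_p(G) & ~~ (P <| G)) ->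
  exists H : {group gT}, [/\ H \char G, abelian H & #|H| = m].
Proof.
move=> pr_p oG m_small lt_pm [P]; rewrite inE => sylP nnP.
have frobG := Frobenius_Sylow_compl pr_p oG m_small lt_pm sylP nnP.
have [K frobGK] := vcharacter.Frobenius_kernel_exists frobG.
exists K; split.
- exact: Frobenius_ker_char frobGK.
- exact: (Frobenius_ker_abelian pr_p oG m_small lt_pm sylP frobGK).
- exact: (card_Frobenius_ker pr_p oG m_small lt_pm sylP frobGK).
Qed.
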